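(* Let $k\ge 1$ and let $L=(l_1,\ldots,l_k)$ be a sequence of positive integers, and let $S=S(L)$ be the spider defined by $L$, with head $v_0$. Let $t$ be an integer with $1\le t\le \alpha(S)$. Then for every $1\le i\le k$ we have $$|\mathcal{I}^t_{v_0}(S)|\le |\mathcal{I}^t_{v_{i,l_i}}(S)|.$$
   Context: For a graph $G$, $\alpha(G)$ is the maximum size of an independent set in $G$, and for an integer $t\le\alpha(G)$, $\mathcal{I}^t(G)$ denotes the family of all independent sets of $G$ of size $t$. For a vertex $x$, $\mathcal{I}^t_x(G)$ denotes the subfamily of sets in $\mathcal{I}^t(G)$ containing $x$ (the star centered at $x$). Given a sequence of positive integers $L=(l_1,\ldots,l_k)$, the spider $S(L)$ is the tree consisting of a head vertex $v_0$ and, for each $1\le i\le k$, a leg which is the path $v_0,v_{i,1},v_{i,2},\ldots,v_{i,l_i}$; distinct legs share only $v_0$. *)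

From mathcomp Require Import all_boot.
Set Implicit Arguments. Unset Strict Implicit. Unset Printing Implicit Defensive.

Section Indep.
Variables (T : finType) (e : rel T).

Definition independent (A : {set T}) : bool :=
  [forall x in A, forall y in A, ~~ e x y].

Definition alpha : nat := \max_(A : {set T} | independent A) #|A|.

Definition indep_t (t : nat) : {set {set T}} :=
  [set A : {set T} | independent A && (#|A| == t)].

Definition indep_star (t : nat) (x : T) : {set {set T}} :=
  [set A in indep_t t | x \in A].
End Indep.

(* The spider S(L), L = (l_0, ..., l_{k-1}) indexed by 'I_k.
   Vertices: None = head v_0;  Some (Tagged i j) with j : 'I_(l i)
   is the vertex v_{i, j+1} (leg i, distance j+1 from the head). *)
Section Spider.
Variables (k : nat) (l : 'I_k -> nat).

Definition spider_vertex : finType := option {i : 'I_k & 'I_(l i)}.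

Definition spider_adj (x y : spider_vertex) : bool :=
  match x, y with
  | None, None => false
  | None, Some u => val (tagged u) == 0
  | Some u, None => val (tagged u) == 0
  | Some u, Some w =>
      (tag u == tag w) &&
      (((val (tagged u)).+1 == val (tagged w)) ||
       ((val (tagged w)).+1 == val (tagged u)))
  end.

Definition spider_head : spider_vertex := None.

Lemma spider_leaf_lt (hl : forall i, 0 < l i) (i : 'I_k) : (l i).-1 < l i.
Proof. by rewrite ltn_predL. Qed.

Definition spider_leaf (hl : forall i, 0 < l i) (i : 'I_k) : spider_vertex :=
  Some (Tagged (fun i => 'I_(l i)) (Ordinal (spider_leaf_lt hl i))).
End Spider.

(* Reverse the path v_0, v_{i,1}, ..., v_{i,l_i} and fix every other vertex. This bijection
   preserves adjacency along the path, and the only edges leaving the path start at v_0, so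
   an edge it could create between the reversed path and the rest of the spider is the image
   of an edge at v_0, which an independent set containing v_0 already avoids. Hence it maps
   the star at v_0 injectively into the star at v_{i,l_i}. *)
From mathcomp Require Import all_boot zify.

Section IndependentImage.
Set Implicit Arguments. Unset Strict Implicit.
Variables (T : finType) (e : rel T).

Lemma independentP (A : {set T}) :
  reflect {in A &, forall x y, ~~ e x y} (independent e A).
Proof.
apply: (iffP forallP) => [indA x y xA yA | indA x].
  by move: (indA x); rewrite xA => /forallP /(_ y); rewrite yA.
by apply/implyP => xA; apply/forall_inP => y yA; apply: indA.
Qed.

Lemma card_indep_star_le (f : T -> T) (t : nat) (x : T) :
    injective f ->
    (forall A, independent e A -> x \in A -> independent e (f @: A)) ->
  #|indep_star e t x| <= #|indep_star e t (f x)|.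
Proof.
move=> f_inj f_indep; rewrite -(card_imset _ (imset_inj f_inj)).
apply/subset_leq_card/subsetP => _ /imsetP [A + ->].
rewrite !inE (card_imset _ f_inj) (mem_imset _ _ f_inj) => /andP [/andP [indA ->] xA].
by rewrite f_indep.
Qed.

Variables (P : pred T) (s : T -> T) (h : T).
Hypotheses (e_sym : symmetric e) (s_stable : {in P, forall x, s x \in P})
  (s_fixed : forall x, x \notin P -> s x = x) (s_adj : {in P &, forall x y, e (s x) (s y) = e x y})
  (exit_at_h : forall x y, x \in P -> y \notin P -> e x y -> x = h).

Lemma independent_imset (A : {set T}) :
  independent e A -> h \in A -> independent e (s @: A).
Proof.
move=> /independentP indA hA.
have cross x y : x \in A -> y \in A -> x \in P -> y \notin P -> ~~ e (s x) (s y).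
  move=> xA yA xP yP; rewrite (s_fixed yP); apply/negP => sxy.
  have sx_h := exit_at_h (s_stable xP) yP sxy.
  by move: (indA h y hA yA); rewrite -sx_h sxy.
apply/independentP => _ _ /imsetP [x xA ->] /imsetP [y yA ->].
case xP: (x \in P); case yP: (y \in P).
- by rewrite s_adj // indA.
- by rewrite cross ?yP.
- by rewrite e_sym cross ?xP.
- by rewrite !s_fixed ?xP ?yP // indA.
Qed.
End IndependentImage.

Section SpiderLeg.
Set Implicit Arguments. Unset Strict Implicit.
Variables (k : nat) (l : 'I_k -> nat) (i : 'I_k).
Notation V := (spider_vertex l).
Notation adj := (@spider_adj k l).

Lemma spider_adj_sym : symmetric adj.
Proof.
by move=> [[j m]|] [[j' m']|] //=; rewrite [j == j']eq_sym orbC.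
Qed.

Definition on_leg (x : V) : bool := if x is Some u then tag u == i else true.

Definition depth (x : V) : nat := if x is Some u then (val (tagged u)).+1 else 0.

(* Depths beyond [l i] give the head as a junk value. *)
Definition leg_vertex (d : nat) : V :=
  if d is d'.+1 then
    if (insub d' : option 'I_(l i)) is Some m then Some (Tagged (fun j => 'I_(l j)) m)
    else None
  else None.

Lemma depth_on_leg x : on_leg x -> depth x <= l i.
Proof. by case: x => [[j m]|] //= /eqP <-. Qed.

Lemma on_leg_vertex d : on_leg (leg_vertex d).
Proof. by case: d => [|d] //=; case: insubP => //= m; rewrite eqxx. Qed.

Lemma depth_leg_vertex d : d <= l i -> depth (leg_vertex d) = d.
Proof. by case: d => [|d] //= lt_d; rewrite insubT. Qed.

Lemma on_leg_inj x y : on_leg x -> on_leg y -> depth x = depth y -> x = y.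
Proof.
case: x => [[j m]|]; case: y => [[j' m']|] //= /eqP Ej /eqP Ej' [Em].
by subst j j'; rewrite (val_inj Em).
Qed.

Lemma spider_adj_on_leg x y : on_leg x -> on_leg y ->
  adj x y = ((depth x).+1 == depth y) || ((depth y).+1 == depth x).
Proof.
case: x => [[j m]|]; case: y => [[j' m']|] //=.
- by move=> /eqP Ej /eqP Ej'; subst j j'; rewrite eqxx !eqSS.
- by rewrite eqSS eq_sym.
- by rewrite eqSS eq_sym orbF.
Qed.

Lemma spider_adj_off_leg x y : on_leg x -> ~~ on_leg y -> adj x y -> x = spider_head l.
Proof.
case: x => [[j m]|]; case: y => [[j' m']|] //= /eqP Ej; subst j.
by rewrite eq_sym => /negbTE ->.
Qed.

Definition reflect_leg (x : V) : V := if on_leg x then leg_vertex (l i - depth x) else x.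

Lemma on_leg_reflect x : on_leg x -> on_leg (reflect_leg x).
Proof. by rewrite /reflect_leg => ->; apply: on_leg_vertex. Qed.

Lemma depth_reflect x : on_leg x -> depth (reflect_leg x) = l i - depth x.
Proof. by rewrite /reflect_leg => ->; rewrite depth_leg_vertex ?leq_subr. Qed.

Lemma reflect_legK : involutive reflect_leg.
Proof.
move=> x; case xi: (on_leg x); last by rewrite /reflect_leg xi xi.
apply: on_leg_inj => //; first by rewrite !on_leg_reflect.
by rewrite !depth_reflect ?on_leg_reflect // subKn ?depth_on_leg.
Qed.

Lemma spider_adj_reflect : {in on_leg &, forall x y, adj (reflect_leg x) (reflect_leg y) = adj x y}.
Proof.
move=> x y xi yi; rewrite !spider_adj_on_leg ?on_leg_reflect // !depth_reflect //.
by move: (depth_on_leg xi) (depth_on_leg yi); lia.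
Qed.

Lemma independent_reflect_leg A :
  independent adj A -> spider_head l \in A -> independent adj (reflect_leg @: A).
Proof.
apply: (independent_imset spider_adj_sym on_leg_reflect _ spider_adj_reflect spider_adj_off_leg).
by move=> x xi; rewrite /reflect_leg ifN.
Qed.

Lemma reflect_leg_head (hl : forall j, 0 < l j) : reflect_leg (spider_head l) = spider_leaf hl i.
Proof.
apply: on_leg_inj; [exact: on_leg_reflect | exact: eqxx |].
by rewrite depth_reflect //= subn0 prednK.
Qed.
End SpiderLeg.

Theorem theorem2p2 (k : nat) (l : 'I_k -> nat) (hl : forall i, 0 < l i)
  (t : nat) :
  1 <= k ->
  1 <= t -> t <= alpha (@spider_adj k l) ->
  forall i : 'I_k,
    #|indep_star (@spider_adj k l) t (spider_head l)|
      <= #|indep_star (@spider_adj k l) t (spider_leaf hl i)|.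
Proof.
move=> _ _ _ i; rewrite -(reflect_leg_head i hl).
exact: card_indep_star_le (can_inj (reflect_legK i)) (independent_reflect_leg i).
Qed.
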